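(* Let $f$ be a periodic traveling wave (librational or rotational, of speed $c$ with $c^2\ne 1$). Then $\sigma(\mathrm{P})=\sigma(\mathrm{P})^*=-\sigma(\mathrm{P})=-\sigma(\mathrm{P})^*$, where $S^*=\{\bar\lambda:\lambda\in S\}$ and $-S=\{-\lambda:\lambda\in S\}$.
   Context: A traveling wave of speed $c$ ($c^2\neq1$) of $u_{tt}-u_{xx}+\sin u=0$ is a real solution $f$ of $(c^2-1)f''+\sin f=0$, with energy $E$ defined by $\tfrac12(c^2-1)(f')^2+1-\cos f=E$. Periodic traveling waves are the librational ones ($0<E<2$) and rotational ones ($E<0$ if $c^2<1$, $E>2$ if $c^2>1$). Set $\gamma=1/(c^2-1)$. $\sigma(\mathrm{P})$ is the set of $\lambda\in\mathbb{C}$ for which $p''-2c\gamma\lambda p'+\gamma(\lambda^2+\cos f(z))p=0$ has a nontrivial solution bounded on $\mathbb{R}$. *)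

From Stdlib Require Import Reals.
From Coquelicot Require Import Coquelicot.
Open Scope R_scope.

Definition traveling_wave (c : R) (f : R -> R) : Prop :=
  c ^ 2 <> 1 /\
  exists f' f'' : R -> R, forall z : R,
    is_derive f z (f' z) /\ is_derive f' z (f'' z) /\
    (c ^ 2 - 1) * f'' z + sin (f z) = 0.

Definition energy (c : R) (f : R -> R) (z : R) : R :=
  / 2 * (c ^ 2 - 1) * (Derive f z) ^ 2 + 1 - cos (f z).

Definition librational_wave (c : R) (f : R -> R) : Prop :=
  traveling_wave c f /\
  exists E : R, (forall z, energy c f z = E) /\ 0 < E < 2.

Definition rotational_wave (c : R) (f : R -> R) : Prop :=
  traveling_wave c f /\
  exists E : R, (forall z, energy c f z = E) /\
    ((c ^ 2 < 1 /\ E < 0) \/ (c ^ 2 > 1 /\ E > 2)).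

Definition periodic_traveling_wave (c : R) (f : R -> R) : Prop :=
  librational_wave c f \/ rotational_wave c f.

Definition gam (c : R) : R := / (c ^ 2 - 1).

Definition sigmaP (c : R) (f : R -> R) : C -> Prop := fun lam =>
  exists p p' p'' : R -> C,
    (forall z : R, is_derive p z (p' z) /\ is_derive p' z (p'' z) /\
      (p'' z - RtoC (2 * c * gam c) * lam * p' z
        + RtoC (gam c) * (lam * lam + RtoC (cos (f z))) * p z)%C = 0%C) /\
    (exists M : R, forall z : R, Cmod (p z) <= M) /\
    (exists z : R, p z <> 0%C).

Definition conj_set (S : C -> Prop) : C -> Prop :=
  fun mu => exists lam, S lam /\ mu = Cconj lam.
Definition neg_set (S : C -> Prop) : C -> Prop :=
  fun mu => exists lam, S lam /\ mu = Copp lam.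
Definition same_set (S T : C -> Prop) : Prop := forall mu, S mu <-> T mu.

(* Since sigma(P) is defined by an equation with real coefficients, complex
   conjugation of a bounded solution p gives one for the conjugate lambda.
   For -lambda, the substitution z |-> z1 - z flips the sign of the first-order
   term, so it suffices that cos f is even about some point z1/2.  Every traveling
   wave is a solution of the pendulum equation f'' = K sin f with K <> 0 and
   passes through a multiple of pi at some z0: otherwise f stays in a band of
   width 2 pi, and f'' = K sin f has constant sign, so f is a bounded convex or
   concave function on R, hence constant, forcing sin f = 0.  Since the
   nonlinearity is odd about f z0, uniqueness for the Lipschitz second-order
   equation makes f point-symmetric about (z0, f z0), so cos f is even about z0. *)

From Stdlib Require Import Reals Lra Psatz Classical.
From Coquelicot Require Import Coquelicot.
Open Scope R_scope.

Lemma is_derive_continuity_pt (h : R -> R) x d : is_derive h x d -> continuity_pt h x.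
Proof.
  intro Hd. apply continuity_pt_filterlim, (ex_derive_continuous h). now exists d.
Qed.

Lemma is_derive_eq {V : NormedModule R_AbsRing} (h : R -> V) x d d' :
  is_derive h x d -> d = d' -> is_derive h x d'.
Proof. now intros Hd <-. Qed.

Lemma increment_ge_of_derive_ge (h h' : R -> R) x y m : x <= y ->
  (forall t, x <= t <= y -> is_derive h t (h' t) /\ m <= h' t) ->
  m * (y - x) <= h y - h x.
Proof.
  intros Hxy Hh.
  assert (Hmin : Rmin x y = x) by (apply Rmin_left; lra).
  assert (Hmax : Rmax x y = y) by (apply Rmax_right; lra).
  destruct (MVT_gen h x y h') as [t [Ht ->]]; rewrite Hmin, Hmax in *.
  - intros t Ht. apply (Hh t); lra.
  - intros t Ht. apply (is_derive_continuity_pt _ _ (h' t)), (Hh t Ht).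
  - destruct (Hh t Ht). nra.
Qed.

Lemma increment_le_of_derive_le (h h' : R -> R) x y m : x <= y ->
  (forall t, x <= t <= y -> is_derive h t (h' t) /\ h' t <= m) ->
  h y - h x <= m * (y - x).
Proof.
  intros Hxy Hh.
  enough (- m * (y - x) <= - h y - - h x) by lra.
  apply (increment_ge_of_derive_ge (fun t => - h t) (fun t => - h' t)); [easy|].
  intros t Ht. destruct (Hh t Ht) as [Hd Hm].
  split; [apply (is_derive_opp h t _ Hd) | lra].
Qed.

Lemma sin_lipschitz a b : Rabs (sin a - sin b) <= Rabs (a - b).
Proof.
  assert (Hinc : forall x y, x <= y -> Rabs (sin y - sin x) <= y - x).
  { intros x y Hxy. apply Rabs_le. split.
    - enough (-1 * (y - x) <= sin y - sin x) by lra.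
      apply (increment_ge_of_derive_ge sin cos); [easy|].
      intros t _. split; [apply is_derive_sin | apply COS_bound].
    - enough (sin y - sin x <= 1 * (y - x)) by lra.
      apply (increment_le_of_derive_le sin cos); [easy|].
      intros t _. split; [apply is_derive_sin | apply COS_bound]. }
  destruct (Rle_or_lt b a) as [H|H].
  - rewrite (Rabs_right (a - b)) by lra. now apply Hinc.
  - rewrite (Rabs_minus_sym (sin a)), (Rabs_left (a - b)) by lra.
    specialize (Hinc a b). lra.
Qed.

Lemma continuous_hits_between (g : R -> R) x y v : (forall t, continuity_pt g t) ->
  g x <= v <= g y -> exists t, g t = v.
Proof.
  intros Hg Hv.
  assert (Hcont : forall t, continuity_pt (fun s => g s - v) t).
  { intro t. apply continuity_pt_minus; [apply Hg | apply continuity_pt_const; now intros ? ?]. }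
  destruct (Rle_or_lt x y) as [Hxy|Hxy].
  - destruct (IVT_cor (fun s => g s - v) x y) as [t [_ Ht]]; auto; [nra|].
    exists t; lra.
  - destruct (IVT_cor (fun s => g s - v) y x) as [t [_ Ht]]; auto; [lra|nra|].
    exists t; lra.
Qed.

Lemma is_derive_exp_weight (W : R -> R) w a t : is_derive W t w ->
  is_derive (fun s => W s * exp (a * s)) t ((w + a * W t) * exp (a * t)).
Proof.
  intro HW. auto_derive.
  - now exists w.
  - replace (Derive _ t) with w by (symmetry; now apply is_derive_unique). ring.
Qed.

Lemma gronwall_zero (W W' : R -> R) L :
  (forall t, is_derive W t (W' t)) -> (forall t, 0 <= W t) ->
  (forall t, Rabs (W' t) <= L * W t) -> W 0 = 0 ->
  forall z, W z = 0.
Proof.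
  intros HW Hpos Hbound H0 z.
  apply Rle_antisym; [|apply Hpos].
  destruct (Rle_or_lt 0 z) as [Hz|Hz].
  - assert (Hdecay : W z * exp (- L * z) - W 0 * exp (- L * 0) <= 0 * (z - 0)).
    { apply (increment_le_of_derive_le (fun t => W t * exp (- L * t))
        (fun t => (W' t + - L * W t) * exp (- L * t)));
        [easy|].
      intros t _. split; [now apply is_derive_exp_weight|].
      pose proof (exp_pos (- L * t)). pose proof (Rle_abs (W' t)). specialize (Hbound t). nra. }
    pose proof (exp_pos (- L * z)). rewrite H0 in Hdecay. nra.
  - assert (Hgrowth : 0 * (0 - z) <= W 0 * exp (L * 0) - W z * exp (L * z)).
    { apply (increment_ge_of_derive_ge (fun t => W t * exp (L * t))
        (fun t => (W' t + L * W t) * exp (L * t)));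
        [lra|].
      intros t _. split; [now apply is_derive_exp_weight|].
      pose proof (exp_pos (L * t)). pose proof (Rle_abs (- W' t)).
      rewrite Rabs_Ropp in *. specialize (Hbound t). nra. }
    pose proof (exp_pos (L * z)). rewrite H0 in Hgrowth. nra.
Qed.

Lemma energy_derivative_bound u v s k : 0 <= k -> Rabs s <= k * Rabs u ->
  Rabs (2 * u * v + 2 * v * s) <= (1 + k) * (u ^ 2 + v ^ 2).
Proof.
  intros Hk Hs.
  assert (Huv : 2 * Rabs u * Rabs v <= u ^ 2 + v ^ 2).
  { rewrite <- (pow2_abs u), <- (pow2_abs v).
    pose proof (pow2_ge_0 (Rabs u - Rabs v)). nra. }
  apply (Rle_trans _ (Rabs (2 * u * v) + Rabs (2 * v * s))); [apply Rabs_triang|].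
  rewrite !Rabs_mult, (Rabs_pos_eq 2) by lra.
  pose proof (Rabs_pos v). pose proof (Rabs_pos u). nra.
Qed.

Definition solves_ode2 (F : R -> R) (y y' y'' : R -> R) : Prop :=
  forall z, is_derive y z (y' z) /\ is_derive y' z (y'' z) /\ y'' z = F (y z).

Lemma solves_ode2_unique (F : R -> R) k (a a' a'' b b' b'' : R -> R) :
  0 <= k -> (forall x y, Rabs (F x - F y) <= k * Rabs (x - y)) ->
  solves_ode2 F a a' a'' -> solves_ode2 F b b' b'' ->
  a 0 = b 0 -> a' 0 = b' 0 -> forall z, a z = b z.
Proof.
  intros Hk HF Ha Hb H0 H0' z.
  (* The energy W of the difference satisfies |W'| <= (1 + k) W and vanishes at 0. *)
  set (W := fun t => (a t - b t) ^ 2 + (a' t - b' t) ^ 2).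
  assert (HW : forall t, is_derive W t
    (2 * (a t - b t) * (a' t - b' t) + 2 * (a' t - b' t) * (F (a t) - F (b t)))).
  { intro t. destruct (Ha t) as [Da [Da' Ea]], (Hb t) as [Db [Db' Eb]].
    pose proof (is_derive_plus _ _ t _ _
      (is_derive_pow _ 2 t _ (is_derive_minus a b t _ _ Da Db))
      (is_derive_pow _ 2 t _ (is_derive_minus a' b' t _ _ Da' Db'))) as Hsum.
    apply (is_derive_eq _ _ _ _ Hsum). simpl. unfold minus, plus, opp; simpl.
    rewrite <- Ea, <- Eb. ring. }
  assert (HWz : W z = 0).
  { apply (gronwall_zero W _ (1 + k) HW).
    - intro t. unfold W.
      pose proof (pow2_ge_0 (a t - b t)). pose proof (pow2_ge_0 (a' t - b' t)). lra.
    - intro t. apply energy_derivative_bound; [easy | apply HF].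
    - unfold W. rewrite H0, H0'. ring. }
  unfold W in HWz. pose proof (pow2_ge_0 (a' z - b' z)).
  apply Rminus_diag_uniq, Rsqr_0_uniq. unfold Rsqr.
  pose proof (pow2_ge_0 (a z - b z)). simpl in *. lra.
Qed.

Lemma is_derive_shift {V : NormedModule R_AbsRing} (h : R -> V) z0 z d :
  is_derive h (z0 + z) d -> is_derive (fun s => h (z0 + s)) z d.
Proof.
  intro Hh. assert (Harg : is_derive (fun s => z0 + s) z 1) by (auto_derive; auto; ring).
  rewrite <- (scal_one d). exact (is_derive_comp h _ z d 1 Hh Harg).
Qed.

Lemma is_derive_reflect {V : NormedModule R_AbsRing} (h : R -> V) z0 z d :
  is_derive h (z0 - z) d -> is_derive (fun s => h (z0 - s)) z (opp d).
Proof.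
  intro Hh.
  assert (Harg : is_derive (fun s => z0 - s) z (opp one)).
  { auto_derive; [easy|]. unfold opp, one; simpl. ring. }
  replace (opp d) with (scal (opp one) d)
    by exact (@scal_opp_one R_AbsRing (NormedModule.ModuleSpace R_AbsRing V) d).
  exact (is_derive_comp h _ z d _ Hh Harg).
Qed.

Lemma solves_ode2_point_symmetric (F : R -> R) k (y y' y'' : R -> R) z0 :
  0 <= k -> (forall x x', Rabs (F x - F x') <= k * Rabs (x - x')) ->
  solves_ode2 F y y' y'' -> (forall x, F (2 * y z0 - x) = - F x) ->
  forall z, y (z0 - z) = 2 * y z0 - y (z0 + z).
Proof.
  intros Hk HF Hy Hodd z.
  enough (Hsym : y (z0 + z) = 2 * y z0 - y (z0 - z)) by lra.
  apply (solves_ode2_unique F k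
    (fun s => y (z0 + s)) (fun s => y' (z0 + s)) (fun s => y'' (z0 + s))
    (fun s => 2 * y z0 - y (z0 - s)) (fun s => y' (z0 - s)) (fun s => - y'' (z0 - s))
    Hk HF).
  - intro t. destruct (Hy (z0 + t)) as [D [D' E]].
    split; [now apply is_derive_shift | split; [now apply is_derive_shift | easy]].
  - intro t. destruct (Hy (z0 - t)) as [D [D' E]]. split; [|split].
    + apply (is_derive_eq _ _ _ _
        (is_derive_minus _ _ _ _ _ (is_derive_const (2 * y z0) t) (is_derive_reflect y z0 t _ D))).
      unfold minus, plus, opp, zero; simpl. ring.
    + exact (is_derive_reflect y' z0 t _ D').
    + rewrite Hodd, E. ring.
  - rewrite Rplus_0_r, Rminus_0_r. ring.
  - now rewrite Rplus_0_r, Rminus_0_r.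
Qed.

Lemma sin_nonvanishing_range (g : R -> R) : (forall t, continuity_pt g t) ->
  (forall t, sin (g t) <> 0) -> forall t, g 0 - PI < g t < g 0 + PI.
Proof.
  intros Hg Hsin t.
  pose proof PI_RGT_0 as Hpi.
  set (n := up (g 0 / PI)).
  destruct (archimed (g 0 / PI)) as [Hup1 Hup2]. fold n in Hup1, Hup2.
  assert (Hn : g 0 < IZR n * PI <= g 0 + PI).
  { assert (Hdiv : g 0 / PI * PI = g 0) by (field; lra). split; nra. }
  assert (Hmult : forall m : Z, forall s, g s <> IZR m * PI).
  { intros m s Hs. apply (Hsin s), sin_eq_0_1. now exists m. }
  split.
  - destruct (Rlt_or_le (g 0 - PI) (g t)) as [|Hle]; [easy|].
    destruct (continuous_hits_between g t 0 (IZR (n - 1) * PI) Hg) as [s Hs].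
    + rewrite minus_IZR. lra.
    + now destruct (Hmult (n - 1)%Z s).
  - destruct (Rlt_or_le (g t) (g 0 + PI)) as [|Hle]; [easy|].
    destruct (continuous_hits_between g 0 t (IZR n * PI) Hg) as [s Hs]; [lra|].
    now destruct (Hmult n s).
Qed.

Lemma convex_above_tangent (y y' y'' : R -> R) x x' :
  (forall t, is_derive y t (y' t) /\ is_derive y' t (y'' t)) -> (forall t, 0 <= y'' t) ->
  y' x * (x' - x) <= y x' - y x.
Proof.
  intros Hy Hconv.
  destruct (Rle_or_lt x x') as [Hle|Hlt].
  - apply (increment_ge_of_derive_ge y y'); [easy|].
    intros t Ht. split; [apply Hy|].
    enough (0 * (t - x) <= y' t - y' x) by lra.
    apply (increment_ge_of_derive_ge y' y''); [lra|].
    intros s _. split; [apply Hy | apply Hconv].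
  - enough (y x - y x' <= y' x * (x - x')) by lra.
    apply (increment_le_of_derive_le y y'); [lra|].
    intros t Ht. split; [apply Hy|].
    enough (0 * (x - t) <= y' x - y' t) by lra.
    apply (increment_ge_of_derive_ge y' y''); [lra|].
    intros s _. split; [apply Hy | apply Hconv].
Qed.

Lemma convex_bounded_above_flat (y y' y'' : R -> R) M :
  (forall t, is_derive y t (y' t) /\ is_derive y' t (y'' t)) -> (forall t, 0 <= y'' t) ->
  (forall t, y t <= M) -> forall x, y' x = 0.
Proof.
  intros Hy Hconv HM x.
  destruct (Req_dec (y' x) 0) as [|Hd]; [easy|exfalso].
  set (x' := x + (M - y x + 1) / y' x).
  pose proof (convex_above_tangent y y' y'' x x' Hy Hconv) as Htan.
  replace (y' x * (x' - x)) with (M - y x + 1) in Htan by (unfold x'; field; easy).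
  specialize (HM x'). lra.
Qed.

Lemma continuous_nonvanishing_sign (g : R -> R) : (forall t, continuity_pt g t) ->
  (forall t, g t <> 0) -> (forall t, 0 < g t) \/ (forall t, g t < 0).
Proof.
  intros Hg Hnz.
  destruct (Rlt_or_le 0 (g 0)) as [Hpos|Hneg]; [left|right]; intro t.
  - destruct (Rlt_or_le 0 (g t)) as [|Hle]; [easy|].
    destruct (continuous_hits_between g t 0 0 Hg) as [s Hs]; [lra|].
    now destruct (Hnz s).
  - destruct (Rlt_or_le (g t) 0) as [|Hle]; [easy|].
    destruct (continuous_hits_between g 0 t 0 Hg) as [s Hs]; [lra|].
    now destruct (Hnz s).
Qed.

Lemma pendulum_sin_root K (y y' y'' : R -> R) : K <> 0 ->
  solves_ode2 (fun s => K * sin s) y y' y'' -> exists z, sin (y z) = 0.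
Proof.
  intros HK Hy. apply NNPP. intro Hnone.
  assert (Hsin : forall t, sin (y t) <> 0) by (intros t Ht; apply Hnone; now exists t).
  assert (Hder : forall t, is_derive y t (y' t) /\ is_derive y' t (y'' t))
    by (intro t; split; apply Hy).
  assert (Hcont : forall t, continuity_pt y t)
    by (intro t; apply (is_derive_continuity_pt _ _ (y' t)), Hy).
  pose proof (sin_nonvanishing_range y Hcont Hsin) as Hrange.
  assert (Hflat : forall t, y' t = 0).
  { assert (Hsign : (forall t, 0 <= y'' t) \/ (forall t, y'' t <= 0)).
    { assert (Hcs : forall t, continuity_pt (fun s => K * sin (y s)) t).
      { intro t. apply continuity_pt_mult; [apply continuity_pt_const; now intros ? ?|].
        apply (continuity_pt_comp y sin); [apply Hcont | apply continuity_sin]. }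
      destruct (continuous_nonvanishing_sign _ Hcs) as [Hs|Hs].
      - intros t. apply Rmult_integral_contrapositive. split; [easy | apply Hsin].
      - left. intro t. destruct (Hy t) as [_ [_ ->]]. now apply Rlt_le.
      - right. intro t. destruct (Hy t) as [_ [_ ->]]. now apply Rlt_le. }
    destruct Hsign as [Hconv|Hconc]; intro t.
    - apply (convex_bounded_above_flat y y' y'' (y 0 + PI) Hder Hconv).
      intro s. specialize (Hrange s). lra.
    - enough (- y' t = 0) by lra.
      apply (convex_bounded_above_flat (fun s => - y s) (fun s => - y' s) (fun s => - y'' s)
        (- y 0 + PI)).
      + intro s. destruct (Hder s) as [D D'].
        split; [exact (is_derive_opp y s _ D) | exact (is_derive_opp y' s _ D')].
      + intro s. specialize (Hconc s). lra.
      + intro s. specialize (Hrange s). lra. }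
  assert (Hstill : forall t, y'' t = 0).
  { intro t.
    assert (Hzero : is_derive (fun _ => 0) t (y'' t))
      by (apply (is_derive_ext y'); apply Hder || easy).
    rewrite <- (is_derive_unique _ _ _ Hzero).
    apply is_derive_unique, (is_derive_const (V := R_NormedModule)). }
  destruct (Hy 0) as [_ [_ Hode]]. rewrite Hstill in Hode.
  apply (Hsin 0). apply (Rmult_eq_reg_l K); [lra | easy].
Qed.

Lemma sin_reflect_root a x : sin a = 0 -> sin (2 * a - x) = - sin x.
Proof.
  intro Ha. rewrite sin_minus, sin_2a, cos_2a_sin, Ha. ring.
Qed.

Lemma cos_reflect_root a x : sin a = 0 -> cos (2 * a - x) = cos x.
Proof.
  intro Ha. rewrite cos_minus, sin_2a, cos_2a_sin, Ha. ring.
Qed.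

Lemma traveling_wave_pendulum c f : traveling_wave c f ->
  gam c <> 0 /\ exists f' f'', solves_ode2 (fun s => - gam c * sin s) f f' f''.
Proof.
  intros [Hc [f' [f'' Hf]]]. split.
  - apply Rinv_neq_0_compat. lra.
  - exists f', f''. intro z. destruct (Hf z) as [D [D' E]].
    split; [easy | split; [easy|]]. unfold gam. field_simplify_eq; lra.
Qed.

Lemma traveling_wave_cos_reflect c f : traveling_wave c f ->
  exists z1, forall z, cos (f (z1 - z)) = cos (f z).
Proof.
  intro Hwave.
  destruct (traveling_wave_pendulum c f Hwave) as [Hgam [f' [f'' Hf]]].
  set (K := - gam c). assert (HK : K <> 0) by (unfold K; lra).
  destruct (pendulum_sin_root K f f' f'' HK Hf) as [z0 Hroot].
  assert (Hlip : forall x x', Rabs (K * sin x - K * sin x') <= Rabs K * Rabs (x - x')).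
  { intros x x'. rewrite <- Rmult_minus_distr_l, Rabs_mult.
    apply Rmult_le_compat_l; [apply Rabs_pos | apply sin_lipschitz]. }
  pose proof (solves_ode2_point_symmetric _ _ f f' f'' z0 (Rabs_pos K) Hlip Hf) as Hsym.
  exists (2 * z0). intro z.
  replace (2 * z0 - z) with (z0 - (z - z0)) by ring.
  rewrite Hsym.
  - replace (z0 + (z - z0)) with z by ring. now apply cos_reflect_root.
  - intro x. rewrite sin_reflect_root by easy. ring.
Qed.

Lemma is_linear_Cconj :
  is_linear (K := R_AbsRing) (U := C_R_NormedModule) (V := C_R_NormedModule) Cconj.
Proof.
  apply (is_linear_ext (fun x : C_R_NormedModule => (fst x, opp (snd x)))); [now intros [a b]|].
  apply (is_linear_prod (K := R_AbsRing) (T := C_R_NormedModule)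
    (U := R_NormedModule) (V := R_NormedModule)); [apply is_linear_fst|].
  apply (is_linear_comp (fun t : C_R_NormedModule => snd t) opp);
    [apply is_linear_snd | apply is_linear_opp].
Qed.

Lemma is_derive_Cconj (p : R -> C) z d :
  is_derive p z d -> is_derive (fun s => Cconj (p s)) z (Cconj d).
Proof.
  intro Hp. eapply filterdiff_ext_lin.
  - apply (filterdiff_comp' p Cconj z _ Cconj Hp), filterdiff_linear, is_linear_Cconj.
  - intro h. destruct d as [a b]. unfold Cconj, scal; simpl. unfold prod_scal, scal; simpl.
    unfold mult; simpl. f_equal; ring.
Qed.

Lemma Cconj_RtoC r : Cconj (RtoC r) = RtoC r.
Proof. unfold Cconj, RtoC; simpl. f_equal; ring. Qed.

Lemma sigmaP_Cconj c f lam : sigmaP c f lam -> sigmaP c f (Cconj lam).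
Proof.
  intros [p [p' [p'' [Hp [[M HM] [z0 Hz0]]]]]].
  exists (fun z => Cconj (p z)), (fun z => Cconj (p' z)), (fun z => Cconj (p'' z)).
  split; [|split].
  - intro z. destruct (Hp z) as [D [D' E]].
    split; [now apply is_derive_Cconj | split; [now apply is_derive_Cconj|]].
    apply (f_equal Cconj) in E.
    rewrite Cplus_conj, Cminus_conj, !Cmult_conj, Cplus_conj, Cmult_conj, !Cconj_RtoC in E.
    exact E.
  - exists M. intro z. rewrite Cmod_conj. apply HM.
  - exists z0. intro Hzero. apply Hz0.
    rewrite <- (Cconj_conj (p z0)), Hzero. apply Cconj_RtoC.
Qed.

Lemma sigmaP_Copp c f z1 : (forall z, cos (f (z1 - z)) = cos (f z)) ->
  forall lam, sigmaP c f lam -> sigmaP c f (Copp lam).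
Proof.
  intros Hcos lam [p [p' [p'' [Hp [[M HM] [w0 Hw0]]]]]].
  exists (fun z => p (z1 - z)), (fun z => Copp (p' (z1 - z))), (fun z => p'' (z1 - z)).
  split; [|split].
  - intro z. destruct (Hp (z1 - z)) as [D [D' E]].
    split; [exact (is_derive_reflect p z1 z _ D)|split].
    + apply (is_derive_eq _ _ _ _ (is_derive_opp _ _ _ (is_derive_reflect p' z1 z _ D'))).
      apply opp_opp.
    + rewrite Hcos in E. rewrite <- E. ring.
  - exists M. intro z. apply HM.
  - exists (z1 - w0). now replace (z1 - (z1 - w0)) with w0 by ring.
Qed.

Lemma same_set_involution (S : C -> Prop) (g : C -> C) :
  (forall lam, g (g lam) = lam) -> (forall lam, S lam -> S (g lam)) ->
  same_set S (fun mu => exists lam, S lam /\ mu = g lam).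
Proof.
  intros Hinv HS mu. split.
  - intro Hmu. exists (g mu). split; [now apply HS | now rewrite Hinv].
  - intros [lam [Hlam ->]]. now apply HS.
Qed.

Lemma same_set_neg_set (S T : C -> Prop) :
  same_set S T -> same_set (neg_set S) (neg_set T).
Proof.
  intros HST mu. split; intros [lam [Hlam ->]]; exists lam; split; try easy; now apply HST.
Qed.

Theorem proposition1p7 (c : R) (f : R -> R) :
  periodic_traveling_wave c f ->
  same_set (sigmaP c f) (conj_set (sigmaP c f)) /\
  same_set (sigmaP c f) (neg_set (sigmaP c f)) /\
  same_set (sigmaP c f) (neg_set (conj_set (sigmaP c f))).
Proof.
  intro Hperiodic.
  assert (Hwave : traveling_wave c f) by now destruct Hperiodic as [[Hw _]|[Hw _]].
  destruct (traveling_wave_cos_reflect c f Hwave) as [z1 Hcos].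
  assert (Hconj : same_set (sigmaP c f) (conj_set (sigmaP c f))).
  { apply same_set_involution; [apply Cconj_conj | apply sigmaP_Cconj]. }
  assert (Hneg : same_set (sigmaP c f) (neg_set (sigmaP c f))).
  { apply same_set_involution; [intro; ring | apply (sigmaP_Copp c f z1 Hcos)]. }
  split; [easy | split; [easy|]].
  intro mu. rewrite (Hneg mu). now apply same_set_neg_set.
Qed.
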